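(* For every $\mathcal{L}_{\mathrm{Int}}$-formula $A$: $A$ is a theorem of intuitionistic propositional logic if and only if $\mathsf{G}(Tr(A))$ is a theorem of the modal logic $\mathsf{K4}$.
   Context: $\mathcal{L}_{\mathrm{Int}}$-formulae are built from propositional letters and $\bot$ by $\wedge,\vee,\rightarrow$. $\mathsf{K4}$ is the normal modal logic $\mathsf{K}\oplus\Box p\rightarrow\Box\Box p$. Gödel's translation $\mathsf{G}$ from formulae with letters, $\bot,\top,\wedge,\vee,\rightarrow$ to modal formulae: $\mathsf{G}(p)=\Box p$, $\mathsf{G}(\bot)=\bot$, $\mathsf{G}(\top)=\top$, $\mathsf{G}(A\wedge B)=\mathsf{G}(A)\wedge\mathsf{G}(B)$, $\mathsf{G}(A\vee B)=\mathsf{G}(A)\vee\mathsf{G}(B)$, $\mathsf{G}(A\rightarrow B)=\Box(\mathsf{G}(A)\rightarrow\mathsf{G}(B))$. Weight: $w(p)=w(\bot)=2$, $w(A\wedge B)=w(A)(1+w(B))$, $w(A\vee B)=1+w(A)+w(B)$, $w(A\rightarrow B)=1+w(A)w(B)$. For $n\ge1$: $\top^1\rightarrow B:=\top\rightarrow B$, $\top^{n+1}\rightarrow B:=\top\rightarrow(\top^n\rightarrow B)$. Positive/negative translations: for $q$ a letter or $\bot$, $q^{+n}=\top^n\rightarrow q$, $q^{-n}=q$; for $\circ\in\{\wedge,\vee\}$, $(A\circ B)^{+n}=\top^n\rightarrow(A^{+n}\circ B^{+n})$, $(A\circ B)^{-n}=A^{-n}\circ B^{-n}$; $(A\rightarrow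 B)^{+n}=\top^n\rightarrow(A^{-n}\rightarrow B^{+n})$, $(A\rightarrow B)^{-n}=A^{+n}\rightarrow B^{-n}$. The translation is $Tr(A):=A^{+w(A)}$. *)

From Stdlib Require Import Arith.

Inductive lint : Type :=
| LVar : nat -> lint
| LBot : lint
| LAnd : lint -> lint -> lint
| LOr  : lint -> lint -> lint
| LImp : lint -> lint -> lint.

Inductive tform : Type :=
| TVar : nat -> tform
| TBot : tform
| TTop : tform
| TAnd : tform -> tform -> tform
| TOr  : tform -> tform -> tform
| TImp : tform -> tform -> tform.

Inductive mform : Type :=
| MVar : nat -> mform
| MBot : mform
| MTop : mform
| MAnd : mform -> mform -> mform
| MOr  : mform -> mform -> mform
| MImp : mform -> mform -> mform
| MBox : mform -> mform.

Inductive IPC_prov : lint -> Prop :=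
| ipc_K  : forall a b, IPC_prov (LImp a (LImp b a))
| ipc_S  : forall a b c,
    IPC_prov (LImp (LImp a (LImp b c)) (LImp (LImp a b) (LImp a c)))
| ipc_A1 : forall a b, IPC_prov (LImp (LAnd a b) a)
| ipc_A2 : forall a b, IPC_prov (LImp (LAnd a b) b)
| ipc_A3 : forall a b, IPC_prov (LImp a (LImp b (LAnd a b)))
| ipc_O1 : forall a b, IPC_prov (LImp a (LOr a b))
| ipc_O2 : forall a b, IPC_prov (LImp b (LOr a b))
| ipc_O3 : forall a b c,
    IPC_prov (LImp (LImp a c) (LImp (LImp b c) (LImp (LOr a b) c)))
| ipc_EFQ : forall a, IPC_prov (LImp LBot a)
| ipc_MP : forall a b, IPC_prov (LImp a b) -> IPC_prov a -> IPC_prov b.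

Inductive K4_prov : mform -> Prop :=
| k4_K  : forall a b, K4_prov (MImp a (MImp b a))
| k4_S  : forall a b c,
    K4_prov (MImp (MImp a (MImp b c)) (MImp (MImp a b) (MImp a c)))
| k4_A1 : forall a b, K4_prov (MImp (MAnd a b) a)
| k4_A2 : forall a b, K4_prov (MImp (MAnd a b) b)
| k4_A3 : forall a b, K4_prov (MImp a (MImp b (MAnd a b)))
| k4_O1 : forall a b, K4_prov (MImp a (MOr a b))
| k4_O2 : forall a b, K4_prov (MImp b (MOr a b))
| k4_O3 : forall a b c,
    K4_prov (MImp (MImp a c) (MImp (MImp b c) (MImp (MOr a b) c)))
| k4_EFQ : forall a, K4_prov (MImp MBot a)
| k4_Top : K4_prov MTop
| k4_DNE : forall a, K4_prov (MImp (MImp (MImp a MBot) MBot) a)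
| k4_Kax : forall a b, K4_prov (MImp (MBox (MImp a b)) (MImp (MBox a) (MBox b)))
| k4_4ax : forall a, K4_prov (MImp (MBox a) (MBox (MBox a)))
| k4_MP  : forall a b, K4_prov (MImp a b) -> K4_prov a -> K4_prov b
| k4_Nec : forall a, K4_prov a -> K4_prov (MBox a).

Fixpoint G (A : tform) : mform :=
  match A with
  | TVar p => MBox (MVar p)
  | TBot => MBot
  | TTop => MTop
  | TAnd a b => MAnd (G a) (G b)
  | TOr a b => MOr (G a) (G b)
  | TImp a b => MBox (MImp (G a) (G b))
  end.

Fixpoint w (A : lint) : nat :=
  match A with
  | LVar _ | LBot => 2
  | LAnd a b => w a * (1 + w b)
  | LOr a b => 1 + w a + w b
  | LImp a b => 1 + w a * w b
  end.

(** top^n -> B  (for n >= 1 as in the paper; topimp 0 B = B is never used by Tr). *)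
Fixpoint topimp (n : nat) (B : tform) : tform :=
  match n with
  | 0 => B
  | S m => TImp TTop (topimp m B)
  end.

Fixpoint lint_to_tform (A : lint) : tform :=
  match A with
  | LVar p => TVar p
  | LBot => TBot
  | LAnd a b => TAnd (lint_to_tform a) (lint_to_tform b)
  | LOr a b => TOr (lint_to_tform a) (lint_to_tform b)
  | LImp a b => TImp (lint_to_tform a) (lint_to_tform b)
  end.

(** Positive (b = true) and negative (b = false) translations A^{+n}, A^{-n}. *)
Fixpoint pn (n : nat) (b : bool) (A : lint) : tform :=
  match A with
  | LVar p => if b then topimp n (TVar p) else TVar p
  | LBot => if b then topimp n TBot else TBot
  | LAnd x y => if b then topimp n (TAnd (pn n true x) (pn n true y))
                else TAnd (pn n false x) (pn n false y)
  | LOr x y => if b then topimp n (TOr (pn n true x) (pn n true y))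
               else TOr (pn n false x) (pn n false y)
  | LImp x y => if b then topimp n (TImp (pn n false x) (pn n true y))
                else TImp (pn n true x) (pn n false y)
  end.

Definition pos (n : nat) (A : lint) : tform := pn n true A.
Definition neg (n : nat) (A : lint) : tform := pn n false A.

Definition Tr (A : lint) : tform := pos (w A) A.

(** The right-to-left direction is semantic: over a reflexive transitive frame the prefixes
    [top^n ->] are vacuous and [G] of either translation of [A] is intuitionistic forcing of [A],
    so K4-soundness on the canonical model of IPC (a preorder) refutes [G (Tr A)] when IPC does
    not prove [A].

    Conversely, let [G (Tr A)] fail at a world of the canonical model of K4, which is transitive
    but not reflexive. The formulas [G (C^-n)], [C] a subformula of [A], persist along [R]; call a
    world stable if one of its successors satisfies no more of them. Since [n = w A] exceeds the
    number of subformulas, every [R]-path of length [n] meets a stable world. On the stable worlds,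
    ordered by the reflexive closure of [R], one proves by simultaneous induction that [G (C^-n)]
    implies forcing of [C], and that forcing of [C] at all stable worlds above [x] implies
    [G (C^+n)] at [x]; stability substitutes for reflexivity where an implication is forced at a
    world itself. By IPC-soundness [A] is forced everywhere, so [G (Tr A)] holds after all. *)

From Stdlib Require Import Lia List Relations Classical ClassicalEpsilon Cantor.
Import ListNotations.

Definition extend {F : Type} (Γ : F -> Prop) (a : F) : F -> Prop := fun y => Γ y \/ y = a.

Section HilbertCalculus.
Context {F : Type} {imp : F -> F -> F} {Thm : F -> Prop}.
Hypothesis thm_K : forall a b, Thm (imp a (imp b a)).
Hypothesis thm_S : forall a b c, Thm (imp (imp a (imp b c)) (imp (imp a b) (imp a c))).

Inductive Der (Γ : F -> Prop) : F -> Prop :=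
| Der_hyp : forall x, Γ x -> Der Γ x
| Der_thm : forall x, Thm x -> Der Γ x
| Der_mp : forall a b, Der Γ (imp a b) -> Der Γ a -> Der Γ b.

Lemma Der_mono (Γ Δ : F -> Prop) a : (forall x, Γ x -> Δ x) -> Der Γ a -> Der Δ a.
Proof. intros HΓΔ D; induction D; [apply Der_hyp | apply Der_thm | eapply Der_mp]; eauto. Qed.

Lemma Der_imp_refl Γ a : Der Γ (imp a a).
Proof.
  eapply Der_mp; [eapply Der_mp; [apply Der_thm, (thm_S a (imp a a) a) | apply Der_thm, thm_K]|].
  apply Der_thm, thm_K.
Qed.

Lemma Der_deduction Γ a b : Der (extend Γ a) b -> Der Γ (imp a b).
Proof.
  intro D; induction D as [x [Hx | ->]|x Hx|x y D1 IH1 D2 IH2].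
  - eapply Der_mp; [apply Der_thm, thm_K | apply Der_hyp, Hx].
  - apply Der_imp_refl.
  - eapply Der_mp; [apply Der_thm, thm_K | apply Der_thm, Hx].
  - eapply Der_mp; [eapply Der_mp; [apply Der_thm, thm_S | exact IH1] | exact IH2].
Qed.

Lemma Der_thm_of_empty (Thm_mp : forall a b, Thm (imp a b) -> Thm a -> Thm b) a :
  Der (fun _ => False) a -> Thm a.
Proof. intro D; induction D; [contradiction | | eapply Thm_mp]; eauto. Qed.

Definition Der_closed (Γ : F -> Prop) := forall a, Der Γ a -> Γ a.

Lemma closed_mp Γ a b : Der_closed Γ -> Γ (imp a b) -> Γ a -> Γ b.
Proof. intros HΓ Hab Ha; apply HΓ; eapply Der_mp; apply Der_hyp; eauto. Qed.

Lemma closed_thm Γ a : Der_closed Γ -> Thm a -> Γ a.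
Proof. intros HΓ Ha; apply HΓ, Der_thm, Ha. Qed.

Lemma closed_thm_mp Γ a b : Der_closed Γ -> Thm (imp a b) -> Γ a -> Γ b.
Proof. intros HΓ Hab; apply closed_mp, closed_thm; auto. Qed.

Lemma closed_thm_mp2 Γ a b c : Der_closed Γ -> Thm (imp a (imp b c)) -> Γ a -> Γ b -> Γ c.
Proof. intros HΓ Habc Ha; apply closed_mp; [|eapply closed_thm_mp]; eauto. Qed.

Context {code : F -> nat}.
Hypothesis code_inj : forall a b, code a = code b -> a = b.

Fixpoint stage (Γ0 : F -> Prop) (c : F) (m : nat) : F -> Prop :=
  match m with
  | 0 => Γ0
  | S m => fun x => stage Γ0 c m x \/ (code x = m /\ ~ Der (extend (stage Γ0 c m) x) c)
  end.

Lemma stage_mono Γ0 c m k x : m <= k -> stage Γ0 c m x -> stage Γ0 c k x.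
Proof. induction 1; simpl; auto. Qed.

Lemma stage_not_Der Γ0 c m : ~ Der Γ0 c -> ~ Der (stage Γ0 c m) c.
Proof.
  intros H0; induction m as [|m IH]; simpl; auto.
  intro D.
  destruct (classic (exists x, code x = m /\ ~ Der (extend (stage Γ0 c m) x) c))
    as [[x [Hx Hnx]]|Hn].
  - apply Hnx; eapply Der_mono; [|exact D].
    intros y [Hy|[Hy _]]; [left | right; apply code_inj; congruence]; auto.
  - apply IH; eapply Der_mono; [|exact D].
    intros y [Hy|Hy]; auto. exfalso; eauto.
Qed.

Definition stage_limit Γ0 c x := exists m, stage Γ0 c m x.

Lemma Der_stage_limit Γ0 c a : Der (stage_limit Γ0 c) a -> exists m, Der (stage Γ0 c m) a.
Proof.
  intro D; induction D as [x [m Hx]|x Hx|x y _ [m1 IH1] _ [m2 IH2]].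
  - exists m; apply Der_hyp, Hx.
  - exists 0; apply Der_thm, Hx.
  - exists (max m1 m2); eapply Der_mp; (eapply Der_mono; [|eassumption]);
      intros; (eapply stage_mono; [|eassumption]); lia.
Qed.

Lemma lindenbaum Γ0 c : ~ Der Γ0 c ->
  exists Γ, (forall x, Γ0 x -> Γ x) /\ Der_closed Γ /\ ~ Γ c /\
            forall x, ~ Γ x -> Der (extend Γ x) c.
Proof.
  intros H0.
  assert (Hcons : ~ Der (stage_limit Γ0 c) c).
  { intros D; destruct (Der_stage_limit _ _ _ D) as [m Dm]; exact (stage_not_Der _ _ m H0 Dm). }
  assert (Hmax : forall x, ~ stage_limit Γ0 c x -> Der (extend (stage_limit Γ0 c) x) c).
  { intros x Hx.
    assert (D : Der (extend (stage Γ0 c (code x)) x) c).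
    { apply NNPP; intro Hn; apply Hx; exists (S (code x)); simpl; auto. }
    eapply Der_mono; [|exact D]; intros y [Hy|Hy]; [left; exists (code x)|right]; auto. }
  exists (stage_limit Γ0 c); repeat split; auto.
  - intros x Hx; exists 0; exact Hx.
  - intros a Da; apply NNPP; intro Hn.
    apply Hcons; eapply Der_mp; [apply Der_deduction, Hmax, Hn | exact Da].
  - intros Hc; apply Hcons, Der_hyp, Hc.
Qed.

End HilbertCalculus.

Fixpoint msat {W : Type} (R : relation W) (V : W -> nat -> Prop) (x : W) (f : mform) : Prop :=
  match f with
  | MVar p => V x p
  | MBot => False
  | MTop => True
  | MAnd a b => msat R V x a /\ msat R V x b
  | MOr a b => msat R V x a \/ msat R V x b
  | MImp a b => msat R V x a -> msat R V x b
  | MBox a => forall y, R x y -> msat R V y a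
  end.

Lemma K4_sound {W : Type} (R : relation W) V f :
  transitive W R -> K4_prov f -> forall x, msat R V x f.
Proof.
  intros HR P; induction P; intros x; simpl in *; try tauto; eauto.
Qed.

Fixpoint iforces {W : Type} (le : relation W) (V : W -> nat -> Prop) (x : W) (A : lint) : Prop :=
  match A with
  | LVar p => V x p
  | LBot => False
  | LAnd a b => iforces le V x a /\ iforces le V x b
  | LOr a b => iforces le V x a \/ iforces le V x b
  | LImp a b => forall y, le x y -> iforces le V y a -> iforces le V y b
  end.

Definition persistent_val {W : Type} (le : relation W) (V : W -> nat -> Prop) :=
  forall x y p, le x y -> V x p -> V y p.

Section IntuitionisticKripke.
Context {W : Type} (le : relation W) (V : W -> nat -> Prop).
Hypotheses (le_refl : reflexive W le) (le_trans : transitive W le)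
           (V_persistent : persistent_val le V).

Lemma iforces_persistent A x y : le x y -> iforces le V x A -> iforces le V y A.
Proof.
  revert x y; induction A; intros x y Hxy; simpl; eauto.
  - intros [? ?]; split; eauto.
  - intros [?|?]; [left|right]; eauto.
Qed.

Lemma IPC_sound A : IPC_prov A -> forall x, iforces le V x A.
Proof.
  induction 1; intros x; simpl in *; firstorder.
  all: eapply iforces_persistent; eauto.
Qed.

End IntuitionisticKripke.

Fixpoint code_lint (A : lint) : nat :=
  match A with
  | LVar n => to_nat (0, n)
  | LBot => to_nat (1, 0)
  | LAnd a b => to_nat (2, to_nat (code_lint a, code_lint b))
  | LOr a b => to_nat (3, to_nat (code_lint a, code_lint b))
  | LImp a b => to_nat (4, to_nat (code_lint a, code_lint b))
  end.

Fixpoint code_mform (A : mform) : nat :=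
  match A with
  | MVar n => to_nat (0, n)
  | MBot => to_nat (1, 0)
  | MTop => to_nat (5, 0)
  | MAnd a b => to_nat (2, to_nat (code_mform a, code_mform b))
  | MOr a b => to_nat (3, to_nat (code_mform a, code_mform b))
  | MImp a b => to_nat (4, to_nat (code_mform a, code_mform b))
  | MBox a => to_nat (6, code_mform a)
  end.

Ltac invert_to_nat := repeat match goal with
  | H : to_nat _ = to_nat _ |- _ => apply to_nat_inj, pair_equal_spec in H as [? ?]; subst
  end.

Lemma code_lint_inj a b : code_lint a = code_lint b -> a = b.
Proof.
  revert b; induction a; destruct b; cbn [code_lint]; intro H; invert_to_nat;
    try discriminate; f_equal; auto.
Qed.

Lemma code_mform_inj a b : code_mform a = code_mform b -> a = b.
Proof.
  revert b; induction a; destruct b; cbn [code_mform]; intro H; invert_to_nat;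
    try discriminate; f_equal; auto.
Qed.

Notation IPC_Der := (@Der lint LImp IPC_prov).
Notation IPC_closed := (@Der_closed lint LImp IPC_prov).
Notation IPC_deduction := (Der_deduction ipc_K ipc_S).

Definition prime_theory (Γ : lint -> Prop) :=
  IPC_closed Γ /\ (forall a b, Γ (LOr a b) -> Γ a \/ Γ b) /\ ~ Γ LBot.

Record IPC_world := { ptheory :> lint -> Prop; ptheory_prime : prime_theory ptheory }.

Definition IPC_le (x y : IPC_world) := forall a, x a -> y a.
Definition IPC_val (x : IPC_world) p := x (LVar p).

Lemma prime_extension Γ0 c :
  ~ IPC_Der Γ0 c -> exists x : IPC_world, (forall a, Γ0 a -> x a) /\ ~ x c.
Proof.
  intros H0.
  destruct (lindenbaum ipc_K ipc_S code_lint_inj _ _ H0) as (Γ & HΓ0 & HΓ & Hc & Hmax).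
  assert (Hprime : prime_theory Γ).
  { split; [exact HΓ | split].
    - intros a b Hab; apply NNPP; intro Hn; apply Hc.
      assert (Hac : Γ (LImp a c)) by (apply HΓ, IPC_deduction, Hmax; tauto).
      assert (Hbc : Γ (LImp b c)) by (apply HΓ, IPC_deduction, Hmax; tauto).
      eapply closed_mp; [exact HΓ | | exact Hab].
      eapply closed_thm_mp2; [exact HΓ | apply ipc_O3 | exact Hac | exact Hbc].
    - intro Hbot; apply Hc; eapply closed_thm_mp; [exact HΓ | apply ipc_EFQ | exact Hbot]. }
  exists {| ptheory := Γ; ptheory_prime := Hprime |}; auto.
Qed.

Section PrimeTheory.
Variable x : IPC_world.

Let x_closed : IPC_closed x := proj1 (ptheory_prime x).

Lemma ptheory_and a b : x (LAnd a b) <-> x a /\ x b.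
Proof.
  split.
  - intro Hab; split; (eapply closed_thm_mp; [exact x_closed | | exact Hab]);
      [apply ipc_A1 | apply ipc_A2].
  - intros [Ha Hb]; eapply closed_thm_mp2; [exact x_closed | apply ipc_A3 | exact Ha | exact Hb].
Qed.

Lemma ptheory_or a b : x (LOr a b) <-> x a \/ x b.
Proof.
  split; [apply (ptheory_prime x) |].
  intros [Ha|Hb]; (eapply closed_thm_mp; [exact x_closed | | eassumption]);
    [apply ipc_O1 | apply ipc_O2].
Qed.

Lemma ptheory_imp a b : x (LImp a b) <-> forall y, IPC_le x y -> y a -> y b.
Proof.
  split.
  - intros Hab y Hxy Ha; eapply closed_mp; [apply (ptheory_prime y) | apply Hxy, Hab | exact Ha].
  - intros H; apply NNPP; intro Hn.
    assert (Hnd : ~ IPC_Der (extend x a) b) by (intro D; apply Hn, x_closed, IPC_deduction, D).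
    destruct (prime_extension _ _ Hnd) as (y & Hxy & Hb).
    apply Hb, H; [intros c Hc; apply Hxy; left; exact Hc | apply Hxy; right; reflexivity].
Qed.

End PrimeTheory.

Lemma IPC_truth A (x : IPC_world) : iforces IPC_le IPC_val x A <-> x A.
Proof.
  revert x; induction A as [p| |a IHa b IHb|a IHa b IHb|a IHa b IHb]; intros x; simpl.
  - reflexivity.
  - split; [tauto | apply (ptheory_prime x)].
  - rewrite ptheory_and, IHa, IHb; reflexivity.
  - rewrite ptheory_or, IHa, IHb; reflexivity.
  - rewrite ptheory_imp; split; intros H y Hxy; specialize (H y Hxy);
      rewrite ?IHa, ?IHb in *; exact H.
Qed.

Lemma IPC_complete A : ~ IPC_prov A -> exists x : IPC_world, ~ iforces IPC_le IPC_val x A.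
Proof.
  intros H.
  assert (H0 : ~ IPC_Der (fun _ => False) A) by (intro D; apply H, (Der_thm_of_empty ipc_MP), D).
  destruct (prime_extension _ _ H0) as (x & _ & Hx); exists x; rewrite IPC_truth; exact Hx.
Qed.

Lemma IPC_le_refl : reflexive IPC_world IPC_le.
Proof. intros x a Ha; exact Ha. Qed.

Lemma IPC_le_trans : transitive IPC_world IPC_le.
Proof. intros x y z Hxy Hyz a Ha; auto. Qed.

Lemma IPC_val_persistent : persistent_val IPC_le IPC_val.
Proof. intros x y p Hxy; apply Hxy. Qed.

Notation K4_Der := (@Der mform MImp K4_prov).
Notation K4_closed := (@Der_closed mform MImp K4_prov).
Notation K4_deduction := (Der_deduction k4_K k4_S).

Definition maxcons (Γ : mform -> Prop) :=
  K4_closed Γ /\ ~ Γ MBot /\ forall a, Γ a \/ Γ (MImp a MBot).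

Record K4_world := { mtheory :> mform -> Prop; mtheory_maxcons : maxcons mtheory }.

Definition K4_rel (x y : K4_world) := forall a, x (MBox a) -> y a.
Definition K4_val (x : K4_world) p := x (MVar p).

Lemma maxcons_extension Γ0 : ~ K4_Der Γ0 MBot -> exists x : K4_world, forall a, Γ0 a -> x a.
Proof.
  intros H0.
  destruct (lindenbaum k4_K k4_S code_mform_inj _ _ H0) as (Γ & HΓ0 & HΓ & Hbot & Hmax).
  assert (Hmc : maxcons Γ).
  { split; [exact HΓ | split; [exact Hbot |]].
    intros a; destruct (classic (Γ a)) as [Ha|Ha]; [left; exact Ha | right].
    apply HΓ, K4_deduction, Hmax, Ha. }
  exists {| mtheory := Γ; mtheory_maxcons := Hmc |}; exact HΓ0.
Qed.

Lemma K4_Der_box (Γ : mform -> Prop) a : K4_Der (fun b => Γ (MBox b)) a -> K4_Der Γ (MBox a).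
Proof.
  intro D; induction D as [b Hb|b Hb|b c _ IH1 _ IH2].
  - apply Der_hyp, Hb.
  - apply Der_thm, k4_Nec, Hb.
  - eapply Der_mp; [eapply Der_mp; [apply Der_thm, k4_Kax | exact IH1] | exact IH2].
Qed.

Section MaximalConsistent.
Variable x : K4_world.

Let x_closed : K4_closed x := proj1 (mtheory_maxcons x).
Let x_consistent : ~ x MBot := proj1 (proj2 (mtheory_maxcons x)).
Let x_complete : forall a, x a \/ x (MImp a MBot) := proj2 (proj2 (mtheory_maxcons x)).

Lemma mtheory_top : x MTop.
Proof. exact (closed_thm _ _ x_closed k4_Top). Qed.

Lemma mtheory_and a b : x (MAnd a b) <-> x a /\ x b.
Proof.
  split.
  - intro Hab; split; (eapply closed_thm_mp; [exact x_closed | | exact Hab]);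
      [apply k4_A1 | apply k4_A2].
  - intros [Ha Hb]; eapply closed_thm_mp2; [exact x_closed | apply k4_A3 | exact Ha | exact Hb].
Qed.

Lemma mtheory_imp a b : x (MImp a b) <-> (x a -> x b).
Proof.
  split; [intros; eapply closed_mp; eauto |].
  intros H; destruct (x_complete a) as [Ha|Hna].
  - eapply closed_thm_mp; [exact x_closed | apply k4_K | exact (H Ha)].
  - apply x_closed, K4_deduction.
    eapply Der_mp; [apply Der_thm, k4_EFQ |].
    eapply Der_mp; apply Der_hyp; [left; exact Hna | right; reflexivity].
Qed.

Lemma mtheory_or a b : x (MOr a b) <-> x a \/ x b.
Proof.
  split.
  - intros Hab; destruct (x_complete a) as [Ha|Hna]; [left; exact Ha |].
    destruct (x_complete b) as [Hb|Hnb]; [right; exact Hb |].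
    exfalso; apply x_consistent.
    eapply closed_mp; [exact x_closed | | exact Hab].
    eapply closed_thm_mp2; [exact x_closed | apply k4_O3 | exact Hna | exact Hnb].
  - intros [Ha|Hb]; (eapply closed_thm_mp; [exact x_closed | | eassumption]);
      [apply k4_O1 | apply k4_O2].
Qed.

Lemma mtheory_box a : x (MBox a) <-> forall y, K4_rel x y -> y a.
Proof.
  split; [intros Ha y Hxy; apply Hxy, Ha |].
  intros H; apply NNPP; intro Hn.
  assert (H0 : ~ K4_Der (extend (fun b => x (MBox b)) (MImp a MBot)) MBot).
  { intro D; apply Hn, x_closed, K4_Der_box.
    eapply Der_mp; [apply Der_thm, k4_DNE | apply K4_deduction, D]. }
  destruct (maxcons_extension _ H0) as (y & Hy).
  assert (Hxy : K4_rel x y) by (intros b Hb; apply Hy; left; exact Hb).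
  apply (proj1 (proj2 (mtheory_maxcons y))).
  eapply closed_mp; [apply (mtheory_maxcons y) | apply Hy; right; reflexivity | apply H, Hxy].
Qed.

End MaximalConsistent.

Lemma K4_rel_trans : transitive K4_world K4_rel.
Proof.
  intros x y z Hxy Hyz a Ha; apply Hyz, Hxy.
  eapply closed_thm_mp; [apply (mtheory_maxcons x) | apply k4_4ax | exact Ha].
Qed.

Lemma K4_truth f (x : K4_world) : msat K4_rel K4_val x f <-> x f.
Proof.
  revert x; induction f as [p| | |a IHa b IHb|a IHa b IHb|a IHa b IHb|a IHa]; intros x; simpl.
  - reflexivity.
  - split; [tauto | apply (mtheory_maxcons x)].
  - split; [intros _; apply mtheory_top | tauto].
  - rewrite mtheory_and, IHa, IHb; reflexivity.
  - rewrite mtheory_or, IHa, IHb; reflexivity.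
  - rewrite mtheory_imp, IHa, IHb; reflexivity.
  - rewrite mtheory_box; split; intros H y Hxy; apply IHa, H, Hxy.
Qed.

Lemma K4_complete f : ~ K4_prov f -> exists x : K4_world, ~ msat K4_rel K4_val x f.
Proof.
  intros H.
  assert (H0 : ~ K4_Der (extend (fun _ => False) (MImp f MBot)) MBot).
  { intro D; apply H, (Der_thm_of_empty k4_MP).
    eapply Der_mp; [apply Der_thm, k4_DNE | apply K4_deduction, D]. }
  destruct (maxcons_extension _ H0) as (x & Hx); exists x; rewrite K4_truth; intro Hf.
  apply (proj1 (proj2 (mtheory_maxcons x))).
  eapply closed_mp; [apply (mtheory_maxcons x) | apply Hx; right; reflexivity | exact Hf].
Qed.

Fixpoint relpow {W : Type} (R : relation W) (n : nat) (x y : W) : Prop :=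
  match n with
  | 0 => x = y
  | S k => exists z, R x z /\ relpow R k z y
  end.

Section GoedelTranslation.
Context {W : Type} (R : relation W) (V : W -> nat -> Prop).
Hypothesis R_trans : transitive W R.

Lemma relpow_in_refl_trans n x y : relpow R n x y -> x = y \/ R x y.
Proof.
  revert x; induction n as [|n IH]; intros x; simpl; [auto |].
  intros (z & Hxz & Hzy); destruct (IH _ Hzy) as [<-|Hzy']; right; eauto.
Qed.

Lemma msat_G_topimp n B x :
  msat R V x (G (topimp n B)) <-> forall y, relpow R n x y -> msat R V y (G B).
Proof.
  revert x; induction n as [|n IH]; intros x; simpl.
  - split; [intros H y <-; exact H | intros H; apply H; reflexivity].
  - setoid_rewrite IH; split.
    + intros H y (z & Hxz & Hzy); exact (H z Hxz I y Hzy).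
    + intros H z Hxz _ y Hzy; eauto.
Qed.

Lemma msat_G_persistent t x y : R x y -> msat R V x (G t) -> msat R V y (G t).
Proof.
  revert x y; induction t; intros x y Hxy; simpl; try tauto; eauto.
  - intros [? ?]; split; eauto.
  - intros [?|?]; [left|right]; eauto.
Qed.

Hypotheses (R_refl : reflexive W R) (V_persistent : persistent_val R V).

Lemma msat_G_topimp_preorder n B x : msat R V x (G (topimp n B)) <-> msat R V x (G B).
Proof.
  rewrite msat_G_topimp; split.
  - intros H; apply H; clear H; induction n; simpl; eauto.
  - intros H y Hxy; destruct (relpow_in_refl_trans _ _ _ Hxy) as [<-|Hxy']; [exact H |].
    eapply msat_G_persistent; eauto.
Qed.

Lemma msat_G_pn_preorder n s C x : msat R V x (G (pn n s C)) <-> iforces R V x C.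
Proof.
  revert x s; induction C as [p| |a IHa b IHb|a IHa b IHb|a IHa b IHb]; intros x s; destruct s;
    cbn [pn]; rewrite ?msat_G_topimp_preorder; simpl.
  1,2: split; [intros H; apply H, R_refl | intros H y Hxy; exact (V_persistent _ _ _ Hxy H)].
  1,2: reflexivity.
  all: setoid_rewrite IHa; setoid_rewrite IHb; reflexivity.
Qed.

End GoedelTranslation.

Section StableWorlds.
Context {W : Type} (R : relation W).
Hypothesis R_trans : transitive W R.
Variable ps : list (W -> Prop).
Hypothesis ps_persistent : forall P x y, In P ps -> R x y -> P x -> P y.

Definition stable u := exists u', R u u' /\ forall P, In P ps -> P u' -> P u.

Fixpoint count_holding (l : list (W -> Prop)) (x : W) : nat :=
  match l with
  | [] => 0
  | P :: l => (if excluded_middle_informative (P x) then 1 else 0) + count_holding l x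
  end.

Lemma count_holding_le_length l x : count_holding l x <= length l.
Proof.
  induction l as [|P l IH]; simpl; [lia |].
  destruct (excluded_middle_informative (P x)); lia.
Qed.

Lemma count_holding_mono l x y :
  incl l ps -> R x y -> count_holding l x <= count_holding l y.
Proof.
  intros Hl Hxy; induction l as [|P l IH]; simpl; [lia |].
  apply incl_cons_inv in Hl as [HP Hl].
  destruct (excluded_middle_informative (P x)) as [HPx|HPx],
           (excluded_middle_informative (P y)) as [HPy|HPy];
    try (specialize (IH Hl); lia).
  exfalso; exact (HPy (ps_persistent P x y HP Hxy HPx)).
Qed.

Lemma count_holding_eq l x y : incl l ps -> R x y ->
  count_holding l x = count_holding l y -> forall P, In P l -> P y -> P x.
Proof.
  intros Hl Hxy; induction l as [|Q l IH]; simpl; [tauto |].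
  apply incl_cons_inv in Hl as [HQ Hl].
  pose proof (count_holding_mono l x y Hl Hxy).
  pose proof (ps_persistent Q x y HQ Hxy).
  destruct (excluded_middle_informative (Q x)), (excluded_middle_informative (Q y));
    intros Heq P [<-|HP] HPy; try tauto; try lia; apply IH; auto; lia.
Qed.

(** Each non-stable step of a path makes one more predicate hold, so a path that is longer
    than the gain it realises meets a stable world. *)
Lemma path_meets_stable k v z : relpow R k v z ->
  count_holding ps z < count_holding ps v + k -> exists u, (v = u \/ R v u) /\ R u z /\ stable u.
Proof.
  revert v; induction k as [|k IH]; intros v; simpl; [intros <-; lia |].
  intros (y & Hvy & Hyz) Hcount.
  assert (Hvz : R v z) by (destruct (relpow_in_refl_trans _ R_trans _ _ _ Hyz) as [<-|]; eauto).
  pose proof (count_holding_mono ps v y (incl_refl _) Hvy).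
  destruct (classic (count_holding ps v = count_holding ps y)) as [Heq|Hneq].
  - exists v; repeat split; auto.
    exists y; split; [exact Hvy | apply count_holding_eq; auto using incl_refl].
  - destruct (IH y Hyz) as (u & Hyu & Huz & Hu); [lia |].
    exists u; split; [right; destruct Hyu as [<-|]; eauto | auto].
Qed.

Lemma long_path_meets_stable k v z : length ps < k -> relpow R k v z ->
  exists u, (v = u \/ R v u) /\ R u z /\ stable u.
Proof.
  intros Hk Hvz; apply (path_meets_stable k); [exact Hvz |].
  pose proof (count_holding_le_length ps z); lia.
Qed.

End StableWorlds.

Fixpoint subformulas (A : lint) : list lint :=
  A :: match A with
       | LAnd a b | LOr a b | LImp a b => subformulas a ++ subformulas b
       | _ => []
       end.

Lemma subformulas_self A : In A (subformulas A).
Proof. destruct A; left; reflexivity. Qed.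

Lemma two_le_w A : 2 <= w A.
Proof. induction A; simpl; nia. Qed.

Lemma length_subformulas_lt_w A : length (subformulas A) < w A.
Proof.
  induction A; simpl; rewrite ?length_app; [lia | lia | ..];
    pose proof (two_le_w A1); pose proof (two_le_w A2); nia.
Qed.

Section StableModel.
Context {W : Type} (R : relation W) (V : W -> nat -> Prop).
Hypothesis R_trans : transitive W R.
Variables (n : nat) (A : lint).
Hypothesis n_large : length (subformulas A) < n.

Definition neg_sat C x := msat R V x (G (neg n C)).
Definition pos_sat C x := msat R V x (G (pos n C)).

Definition neg_preds := map neg_sat (subformulas A).

Lemma neg_preds_persistent P x y : In P neg_preds -> R x y -> P x -> P y.
Proof.
  unfold neg_preds; rewrite in_map_iff; intros (C & <- & _).
  apply msat_G_persistent, R_trans.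
Qed.

Record sworld := { sworld_pt :> W; sworld_stable : stable R neg_preds sworld_pt }.

Definition sworld_le (u v : sworld) := sworld_pt u = v \/ R u v.
Definition sworld_val (u : sworld) p := msat R V u (MBox (MVar p)).

Lemma sworld_le_refl : reflexive sworld sworld_le.
Proof. intros u; left; reflexivity. Qed.

Lemma sworld_le_trans : transitive sworld sworld_le.
Proof.
  intros u v t [Huv|Huv] [Hvt|Hvt]; unfold sworld_le;
    rewrite ?Huv, <- ?Hvt; eauto.
Qed.

Lemma sworld_val_persistent : persistent_val sworld_le sworld_val.
Proof.
  intros u v p [Huv|Huv]; unfold sworld_val; [rewrite Huv; auto |].
  exact (msat_G_persistent _ V R_trans (TVar p) _ _ Huv).
Qed.

Let sforces := iforces sworld_le sworld_val.

Lemma reach_trans x y z : R x y -> y = z \/ R y z -> R x z.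
Proof. intros Hxy [<-|Hyz]; eauto. Qed.

Lemma sforces_below (u v : sworld) (x : W) C :
  R u x -> x = v \/ R x v -> sforces u C -> sforces v C.
Proof.
  intros Hux Hxv; apply iforces_persistent;
    auto using sworld_le_trans, sworld_val_persistent.
  right; exact (reach_trans _ _ _ Hux Hxv).
Qed.

Lemma stable_neg_sat (u : sworld) C : In C (subformulas A) ->
  (forall y, R u y -> neg_sat C y) -> neg_sat C u.
Proof.
  intros HC Hsucc; destruct (sworld_stable u) as (u' & Huu' & Hback).
  apply (Hback (neg_sat C)); [apply in_map, HC | apply Hsucc, Huu'].
Qed.

(** This is where the weight enters: a path of [n] steps passes through a stable world. *)
Lemma pos_sat_padding B (x : W) :
  (forall (u : sworld) y, x = u \/ R x u -> R u y -> msat R V y (G B)) ->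
  msat R V x (G (topimp n B)).
Proof.
  intros H; apply msat_G_topimp; intros y Hxy.
  destruct (long_path_meets_stable _ R_trans neg_preds neg_preds_persistent n x y)
    as (u & Hxu & Huy & Hu); [unfold neg_preds; rewrite length_map; exact n_large | exact Hxy |].
  exact (H {| sworld_pt := u; sworld_stable := Hu |} y Hxu Huy).
Qed.

Definition neg_sat_sforces C := forall u : sworld, neg_sat C u -> sforces u C.
Definition sforces_pos_sat C :=
  forall x : W, (forall u : sworld, x = u \/ R x u -> sforces u C) -> pos_sat C x.

Lemma pos_sat_above C (u : sworld) (x : W) :
  sforces_pos_sat C -> R u x -> sforces u C -> pos_sat C x.
Proof. intros HC Hux Hu; apply HC; intros v Hxv; exact (sforces_below u v x C Hux Hxv Hu). Qed.

Lemma sforces_pos_sat_var p : sforces_pos_sat (LVar p).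
Proof.
  intros x H; apply pos_sat_padding; intros u y Hxu Huy.
  exact (msat_G_persistent _ V R_trans (TVar p) _ _ Huy (H u Hxu)).
Qed.

Lemma sforces_pos_sat_bot : sforces_pos_sat LBot.
Proof. intros x H; apply pos_sat_padding; intros u y Hxu _; exact (H u Hxu). Qed.

Lemma neg_sat_sforces_and a b :
  neg_sat_sforces a -> neg_sat_sforces b -> neg_sat_sforces (LAnd a b).
Proof. intros Na Nb u [Hua Hub]; split; [apply Na | apply Nb]; assumption. Qed.

Lemma sforces_pos_sat_and a b :
  sforces_pos_sat a -> sforces_pos_sat b -> sforces_pos_sat (LAnd a b).
Proof.
  intros Pa Pb x H; apply pos_sat_padding; intros u y Hxu Huy.
  destruct (H u Hxu) as [Hua Hub].
  split; [exact (pos_sat_above a u y Pa Huy Hua) | exact (pos_sat_above b u y Pb Huy Hub)].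
Qed.

Lemma neg_sat_sforces_or a b :
  neg_sat_sforces a -> neg_sat_sforces b -> neg_sat_sforces (LOr a b).
Proof. intros Na Nb u [Hua|Hub]; [left; apply Na | right; apply Nb]; assumption. Qed.

Lemma sforces_pos_sat_or a b :
  sforces_pos_sat a -> sforces_pos_sat b -> sforces_pos_sat (LOr a b).
Proof.
  intros Pa Pb x H; apply pos_sat_padding; intros u y Hxu Huy.
  destruct (H u Hxu) as [Hua|Hub];
    [left; exact (pos_sat_above a u y Pa Huy Hua) | right; exact (pos_sat_above b u y Pb Huy Hub)].
Qed.

Lemma neg_sat_sforces_imp a b : In b (subformulas A) ->
  sforces_pos_sat a -> neg_sat_sforces b -> neg_sat_sforces (LImp a b).
Proof.
  intros Hb Pa Nb u Hu v Huv Hva.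
  assert (Hpa : pos_sat a v).
  { apply Pa; intros t Hvt.
    exact (iforces_persistent _ _ sworld_le_trans sworld_val_persistent a v t Hvt Hva). }
  apply Nb; destruct Huv as [Huv|Huv]; [| exact (Hu v Huv Hpa)].
  (* [u] is [v] itself, not an [R]-predecessor: stability transfers [b^-] back from a successor. *)
  apply stable_neg_sat; [exact Hb |].
  intros y Hvy; rewrite <- Huv in Hvy, Hpa; apply Hu; [exact Hvy |].
  exact (msat_G_persistent _ V R_trans _ _ _ Hvy Hpa).
Qed.

Lemma sforces_pos_sat_imp a b :
  neg_sat_sforces a -> sforces_pos_sat b -> sforces_pos_sat (LImp a b).
Proof.
  intros Na Pb x H; apply pos_sat_padding; intros u y Hxu Huy t Hyt Hta.
  apply Pb; intros v Htv; apply (H u Hxu).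
  - right; exact (reach_trans _ _ _ (R_trans _ _ _ Huy Hyt) Htv).
  - apply Na; destruct Htv as [<-|Htv]; [exact Hta |].
    exact (msat_G_persistent _ V R_trans _ _ _ Htv Hta).
Qed.

Lemma stable_model_translation C : incl (subformulas C) (subformulas A) ->
  neg_sat_sforces C /\ sforces_pos_sat C.
Proof.
  induction C as [p| |a IHa b IHb|a IHa b IHb|a IHa b IHb]; intros Hinc.
  - split; [intros u Hu; exact Hu | apply sforces_pos_sat_var].
  - split; [intros u [] | apply sforces_pos_sat_bot].
  - apply incl_cons_inv in Hinc as [_ Hinc]; apply incl_app_inv in Hinc as [Ha Hb].
    destruct (IHa Ha), (IHb Hb).
    split; [apply neg_sat_sforces_and | apply sforces_pos_sat_and]; assumption.
  - apply incl_cons_inv in Hinc as [_ Hinc]; apply incl_app_inv in Hinc as [Ha Hb].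
    destruct (IHa Ha), (IHb Hb).
    split; [apply neg_sat_sforces_or | apply sforces_pos_sat_or]; assumption.
  - apply incl_cons_inv in Hinc as [_ Hinc]; apply incl_app_inv in Hinc as [Ha Hb].
    destruct (IHa Ha), (IHb Hb).
    split; [apply neg_sat_sforces_imp; [apply Hb, subformulas_self | ..] |
            apply sforces_pos_sat_imp]; assumption.
Qed.

End StableModel.

Theorem mainTheorem14 (A : lint) : IPC_prov A <-> K4_prov (G (Tr A)).
Proof.
  split.
  - intros HA; apply NNPP; intros Hn.
    destruct (K4_complete _ Hn) as (x & Hx); apply Hx.
    apply (proj2 (stable_model_translation K4_rel K4_val K4_rel_trans (w A) A
                    (length_subformulas_lt_w A) A (incl_refl _))).
    intros u _; apply IPC_sound; auto using sworld_le_refl, sworld_le_trans, sworld_val_persistent,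
      K4_rel_trans.
  - intros HK; apply NNPP; intros Hn.
    destruct (IPC_complete _ Hn) as (x & Hx); apply Hx.
    apply (msat_G_pn_preorder _ _ IPC_le_trans IPC_le_refl IPC_val_persistent (w A) true).
    exact (K4_sound _ _ _ IPC_le_trans HK x).
Qed.
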